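(* Let $\mathfrak W=\{A_0,\dots,A_p\}$ be a finite collection of finite subsets of $\mathbb N$, let $e,k,y\in\mathbb N$, let $\sigma$ be a finite string of natural numbers, and put $m=(y-1)\left(\prod_{j\le p}|A_j|\right)+1$. Then at least one of the following holds: (1) there exist a selection $S$ of $\mathfrak W$ and a finite tree $F\subseteq\mathbb N^{<\omega}$ such that $F$ is $y$-branching below $\sigma$, every terminal node of $F$ has length $|\sigma|+k$, and $F$ accepts $S$ for $e$; (2) there are fewer than $m$ strings $\tau$ with $\tau^-=\sigma$ (pairwise distinct, i.e. siblings immediately below $\sigma$) each of which is $i$-bad relative to $\langle\mathfrak W,m,e\rangle$ for some $i\le k$.
   Context: Strings are finite sequences of natural numbers, viewed as functions on an initial segment of $\mathbb N$; $|\sigma|$ is the length, and for $|\sigma|>0$, $\sigma^-=\sigma\restriction(|\sigma|-1)$. Two strings $\tau_1\ne\tau_2$ with $\tau_1^-=\tau_2^-=\sigma$ are siblings immediately below $\sigma$. For an oracle program (Turing functional) with index $e$ and a string $\sigma$, $W^\sigma_e$ is the set of $x$ such that the oracle program $e$ with any oracle extending $\sigma$, using only oracle queries below $|\sigma|$ (use $\le|\sigma|$), halts on input $x$. For a finite $S\subseteq\mathbb N$, $\sigma$ accepts $S$ for $e$ if $S\subseteq W^\sigma_e$; a finite tree $F$ accepts $S$ for $e$ if every terminal node of $F$ accepts $S$ for $e$. A selection of a finite collection of sets $\mathfrak W$ is a set containing exactly one element from each member of $\mathfrak W$. A finite tree $F$ is $y$-branching below $\sigma$ (of depth $k$) if every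 node of $F$ is a prefix or extension of $\sigma$, every terminal node has length $|\sigma|+k$, and every node of $F$ extending $\sigma$ (including $\sigma$) of length less than $|\sigma|+k$ has at least $y$ distinct immediate extensions in $F$. Badness is defined inductively: $\sigma$ is 1-bad relative to $\langle\mathfrak W,m,e\rangle$ if $\sigma$ accepts some selection of $\mathfrak W$ for $e$; $\sigma$ is $(n+1)$-bad relative to $\langle\mathfrak W,m,e\rangle$ if $\sigma$ has $m$ distinct extensions of length $|\sigma|+1$ that are $n$-bad relative to $\langle\mathfrak W,m,e\rangle$. *)

From HB Require Import structures.
From mathcomp Require Import all_boot.
From mathcomp Require Import finmap.

Set Implicit Arguments.
Unset Strict Implicit.
Unset Printing Implicit Defensive.



(* A concrete model of oracle programs: register machines with an     *)
(* oracle instruction.                                                 *)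
Inductive instr := INC of nat | DEC of nat & nat | ORC of nat.

Definition upd (g : nat -> nat) (r v : nat) : nat -> nat :=
  fun i => if i == r then v else g i.

Fixpoint halts_within (f : nat -> nat) (u : nat) (P : seq instr)
    (n pc : nat) (g : nat -> nat) : bool :=
  if size P <= pc then true else
  match n with
  | 0 => false
  | n'.+1 =>
    match nth (INC 0) P pc with
    | INC r => halts_within f u P n' pc.+1 (upd g r (g r).+1)
    | DEC r j => if g r == 0 then halts_within f u P n' j g
                 else halts_within f u P n' pc.+1 (upd g r (g r).-1)
    | ORC r => (g r < u) && halts_within f u P n' pc.+1 (upd g r (f (g r)))
    end
  end.

(* Goedel numbering of programs (surjective, via MathComp's pickling). *)
Definition decode_pair (n : nat) : option (nat * nat)%type := choice.unpickle n.

Definition decode_instr (k : nat) : instr :=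
  match modn k 3 with
  | 0 => INC (divn k 3)
  | 1 => match decode_pair (divn k 3) with
         | Some (r, j) => DEC r j
         | None => INC 0
         end
  | _ => ORC (divn k 3)
  end.

Definition program (e : nat) : seq instr :=
  match (choice.unpickle e : option (seq nat)) with
  | Some s => map decode_instr s
  | None => [::]
  end.

Definition extends_fun (f : nat -> nat) (s : seq nat) : Prop :=
  forall i, i < size s -> f i = nth 0 s i.

(* x \in W^s_e : program e on input x (in register 0), with any oracle *)
(* extending s, halts using only oracle queries below |s|.            *)
Definition W (e : nat) (s : seq nat) (x : nat) : Prop :=
  forall f, extends_fun f s ->
    exists n, halts_within f (size s) (program e) n 0
                (fun i => if i == 0 then x else 0).

Definition accepts (e : nat) (s : seq nat) (S : {fset nat}) : Prop :=
  forall x, x \in S -> W e s x.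

Definition selection (p : nat) (A : nat -> {fset nat}) (S : {fset nat}) : Prop :=
  (forall x, x \in S -> exists j, j <= p /\ x \in A j) /\
  (forall j, j <= p -> (#|` (S `&` A j)|)%fset = 1).

Definition is_tree (F : {fset (seq nat)}) : Prop :=
  [::] \in F /\ forall t n, t \in F -> take n t \in F.

Definition terminal (F : {fset (seq nat)}) (t : seq nat) : Prop :=
  t \in F /\ ~ (exists r, r \in F /\ prefix t r /\ size t < size r).

(* t is an immediate extension of s, i.e. t^- = s *)
Definition child (s t : seq nat) : Prop :=
  prefix s t /\ size t = (size s).+1.

Definition y_branching (y : nat) (s : seq nat) (k : nat) (F : {fset (seq nat)}) : Prop :=
  (forall t, t \in F -> prefix t s \/ prefix s t) /\
  (forall t, terminal F t -> size t = size s + k) /\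
  (forall t, t \in F -> prefix s t -> size t < size s + k ->
     exists L : seq (seq nat), uniq L /\ size L = y /\
       forall r, r \in L -> r \in F /\ child t r).

Definition tree_accepts (e : nat) (F : {fset (seq nat)}) (S : {fset nat}) : Prop :=
  forall t, terminal F t -> accepts e t S.

(* n-badness relative to <W, m, e>  (defined for n >= 1; 0-bad is False) *)
Fixpoint bad (p : nat) (A : nat -> {fset nat}) (m e : nat) (n : nat) (s : seq nat) : Prop :=
  match n with
  | 0 => False
  | n'.+1 =>
    if n' is 0 then exists S, selection p A S /\ accepts e s S
    else exists L : seq (seq nat), uniq L /\ size L = m /\
           forall t, t \in L -> child s t /\ bad p A m e n' t
  end.

(* m = (y - 1) * prod_{j <= p} |A_j| + 1  (truncated subtraction on nat) *)
Definition m_of (p : nat) (A : nat -> {fset nat}) (y : nat) : nat :=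
  (y - 1) * (\prod_(j < p.+1) (#|` A j|)%fset) + 1.

From HB Require Import structures.
From mathcomp Require Import all_boot.
From mathcomp Require Import finmap.
From Stdlib Require Import Classical_Prop.

Set Implicit Arguments.
Unset Strict Implicit.
Unset Printing Implicit Defensive.

(* Call a list [Ls] of strings "branching leaves" below [s] of depth [d] for a
   set [S] if it is the set of terminal nodes of a [y]-branching tree of depth
   [d] below [s] all of whose terminal nodes accept [S].  A string accepting
   [S] has branching leaves of every depth, and if [max(1,y)] distinct
   children of [s] have branching leaves of depth [d] for the same [S], their
   union is a set of branching leaves of depth [d+1] below [s].  Every
   selection is the set of entries of a sequence [x_0, ..., x_p] with
   [x_j \in A_j], so there are at most [prod |A_j|] selections; hence among
   [m = (y-1) prod |A_j| + 1] children, each with branching leaves for some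
   selection, [y] share the same selection.  By induction, an [i]-bad string
   with [i <= d+1] has branching leaves of depth [d] for some selection, and
   the [m] bad children of [s] of alternative (2) yield the tree of (1). *)

Lemma halts_within_mono f u u' P n pc g :
  u <= u' -> halts_within f u P n pc g -> halts_within f u' P n pc g.
Proof.
move=> uu'; elim: n pc g => [|n IH] pc g /=; case: ifP => // _.
case: (nth _ _ _) => [r|r j|r]; first exact: IH.
  by case: ifP => _; apply: IH.
by case/andP=> ru h; rewrite (leq_trans ru uu') /=; apply: IH.
Qed.

Lemma prefix_takeE {T : eqType} {a l : seq T} : prefix a l -> take (size a) l = a.
Proof. by rewrite prefixE => /eqP. Qed.

Lemma prefix_size_eq {T : eqType} {a b : seq T} :
  prefix a b -> size b <= size a -> a = b.
Proof. by move=> ab ba; rewrite -(prefix_takeE ab) take_oversize. Qed.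

Lemma prefixes_ordered {T : eqType} {a b l : seq T} :
  prefix a l -> prefix b l -> size a <= size b -> prefix a b.
Proof.
move=> /prefix_takeE al /prefix_takeE bl ab.
by rewrite prefixE -bl take_takel // al eqxx.
Qed.

Lemma accepts_prefix e (t t' : seq nat) S :
  prefix t t' -> accepts e t S -> accepts e t' S.
Proof.
move=> tt' acc x xS f ft'.
have ft : extends_fun f t.
  move=> i it; rewrite ft'; last exact: leq_trans it (size_prefix tt').
  by rewrite -(prefix_takeE tt') nth_take.
have [n hn] := acc x xS f ft; exists n.
exact: halts_within_mono (size_prefix tt') hn.
Qed.

Lemma in_seq_choice {X Y : eqType} (Q : X -> Y -> Prop) (s : seq X) :
  (forall x, x \in s -> exists z, Q x z) ->
  exists P : seq (X * Y), unzip1 P = s /\ forall q, q \in P -> Q q.1 q.2.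
Proof.
elim: s => [|x s IH] hs; first by exists [::].
have [z xz] := hs x (mem_head _ _).
have [|P [Ps hP]] := IH; first by move=> x' x's; apply: hs; rewrite inE x's orbT.
exists ((x, z) :: P); split; first by rewrite /= Ps.
by move=> q; rewrite inE => /predU1P [-> //|]; apply: hP.
Qed.

Lemma count_mem_pigeonhole {T : eqType} b (U s : seq T) :
  {subset s <= U} -> b * size U < size s ->
  exists2 z, z \in s & b < count_mem z s.
Proof.
move=> sU; case: (boolP (has (fun z => b < count_mem z s) s)) => [/hasP //|].
move=> /hasPn small; rewrite ltnNge => /negP; case.
have count_le z : count_mem z s <= b.
  case: (boolP (z \in s)) => [/small|/count_memPn ->//]; by rewrite -leqNgt.
rewrite -count_predT -(eq_in_count (a1 := mem U)) //.
elim: U {sU} => [|u U IH]; first by rewrite count_pred0.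
rewrite /= mulnS; apply: (@leq_trans (count (predU (pred1 u) (mem U)) s)).
  by apply: sub_count => z; rewrite /= inE.
rewrite -(leq_add2r (count (predI (pred1 u) (mem U)) s)) count_predUI.
by rewrite -addnA leq_add // (leq_trans IH) ?leq_addr.
Qed.

Fixpoint transversal_seqs (A : nat -> {fset nat}) (n : nat) : seq (seq nat) :=
  if n is n'.+1 then
    [seq rcons s x | s <- transversal_seqs A n', x <- enum_fset (A n')]
  else [:: [::]].

Lemma size_transversal_seqs A n :
  size (transversal_seqs A n) = \prod_(j < n) #|` A j|.
Proof.
elim: n => [|n IH]; first by rewrite big_ord0.
by rewrite /= size_allpairs IH big_ord_recr.
Qed.

Lemma transversal_seq_within A (S : {fset nat}) n :
  (forall j, j < n -> #|` S `&` A j| = 1)%fset ->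
  exists2 s, s \in transversal_seqs A n &
    {subset s <= S} /\ forall j, j < n -> {subset (S `&` A j)%fset <= s}.
Proof.
elim: n => [|n IH] hS; first by exists [::].
have [|s sT [sS Ss]] := IH; first by move=> j jn; apply: hS (leqW jn).
have /cardfs1P [x Sx] : (#|` S `&` A n| == 1)%fset by rewrite hS.
have : x \in (S `&` A n)%fset by rewrite Sx in_fset1.
rewrite in_fsetI => /andP [xS xA].
exists (rcons s x); first exact: allpairs_f.
split=> [z | j]; first by rewrite mem_rcons inE => /predU1P [-> | /sS].
rewrite ltnS leq_eqVlt => /predU1P [-> z | /Ss sub z zSA].
  by rewrite Sx in_fset1 => /eqP ->; rewrite mem_rcons mem_head.
by rewrite mem_rcons inE (sub z zSA) orbT.
Qed.

Definition selection_candidates p A : seq {fset nat} :=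
  [seq [fset x in s]%fset | s <- transversal_seqs A p.+1].

Lemma selection_candidate p A S : selection p A S -> S \in selection_candidates p A.
Proof.
move=> [SA card1]; have [s sT [sS Ss]] := @transversal_seq_within A S p.+1 card1.
apply/mapP; exists s => //; apply/fsetP => x; rewrite in_fset.
apply/idP/idP => [xS | /sS //]; have [j [jp xA]] := SA x xS.
by apply: (Ss j jp); rewrite in_fsetI xS.
Qed.

Section BranchingLeaves.

Variables (e y : nat) (S : {fset nat}).

Definition branching_leaves (s : seq nat) (d : nat) (Ls : seq (seq nat)) : Prop :=
  Ls != [::] /\
  (forall l, l \in Ls -> prefix s l /\ size l = size s + d /\ accepts e l S) /\
  (forall t, prefix s t -> size t < size s + d -> has (prefix t) Ls ->
     exists L : seq (seq nat), uniq L /\ size L = y /\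
       forall r, r \in L -> child t r /\ has (prefix r) Ls).

Lemma branching_leaves_root s d Ls :
  branching_leaves s d Ls -> has (prefix s) Ls.
Proof.
case: Ls => [[]//|l Ls [_ [leaves _]]] /=.
by rewrite (leaves l (mem_head _ _)).1.
Qed.

Lemma branching_leaves_flatten tau d (P : seq (seq nat * seq (seq nat))) :
  uniq (unzip1 P) -> maxn 1 y <= size P ->
  (forall q, q \in P -> child tau q.1 /\ branching_leaves q.1 d q.2) ->
  branching_leaves tau d.+1 (flatten (unzip2 P)).
Proof.
move=> uP yP hP; set Ls := flatten _.
have mem_Ls l : reflect (exists2 q, q \in P & l \in q.2) (l \in Ls).
  apply: (iffP flattenP) => [[_ /mapP [q qP ->]] lq | [q qP lq]].
    by exists q.
  by exists q.2 => //; apply: map_f.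
have has_Ls q r : q \in P -> has (prefix r) q.2 -> has (prefix r) Ls.
  by move=> qP /hasP [l lq rl]; apply/hasP; exists l => //; apply/mem_Ls; exists q.
split; [|split].
- have qP := mem_nth ([::], [::]) (leq_trans (leq_maxl 1 y) yP).
  have /hasP [l lLs _] := has_Ls _ _ qP (branching_leaves_root (hP _ qP).2).
  by apply/eqP => Ls0; rewrite Ls0 in lLs.
- move=> l /mem_Ls [q qP lq]; have [[tq sq] [_ [leaves _]]] := hP q qP.
  have [ql [sl acc]] := leaves l lq.
  by split; [exact: prefix_trans tq ql | rewrite sl sq addSnnS].
move=> t taut st /hasP [l /mem_Ls [q qP lq] tl].
have [[tauq sq] [_ [leaves branching]]] := hP q qP.
case: (ltngtP (size tau) (size t)) => [tau_t | | tau_t].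
- have qt : prefix q.1 t by apply: prefixes_ordered (leaves l lq).1 tl _; rewrite sq.
  have tq : size t < size q.1 + d by rewrite sq addSnnS.
  have tLs : has (prefix t) q.2 by apply/hasP; exists l.
  have [L [uL [sL hL]]] := branching t qt tq tLs.
  by exists L; do 2!split=> //; move=> r /hL [tr rq]; split=> //; apply: has_Ls qP rq.
- by rewrite ltnNge size_prefix.
rewrite -(prefix_size_eq taut (eq_leq (esym tau_t))).
exists (take y (unzip1 P)); split; first exact: take_uniq.
split; first by rewrite size_takel // size_map (leq_trans (leq_maxr 1 y) yP).
move=> _ /mem_take /mapP [q' q'P ->]; have [tauq' lq'] := hP q' q'P.
by split=> //; apply: has_Ls q'P (branching_leaves_root lq').
Qed.

Lemma branching_leaves_children tau d (C : seq (seq nat)) :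
  uniq C -> maxn 1 y <= size C ->
  (forall c, c \in C -> child tau c /\ exists Lc, branching_leaves c d Lc) ->
  exists Ls, branching_leaves tau d.+1 Ls.
Proof.
move=> uC yC hC.
have [P [PC hP]] := in_seq_choice (fun c cC => (hC c cC).2).
exists (flatten (unzip2 P)); apply: branching_leaves_flatten.
- by rewrite PC.
- by move: yC; rewrite -PC size_map.
by move=> q qP; split; [apply: (hC _ _).1; rewrite -PC; apply: map_f | apply: hP].
Qed.

Lemma accepts_branching_leaves tau d :
  accepts e tau S -> exists Ls, branching_leaves tau d Ls.
Proof.
elim: d tau => [|d IH] tau acc.
  exists [:: tau]; split=> //; split=> [l | t taut].
    by rewrite inE => /eqP ->; rewrite prefix_refl addn0.
  by rewrite addn0 ltnNge size_prefix.
apply: (@branching_leaves_children tau d [seq rcons tau i | i <- iota 0 (maxn 1 y)]).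
- by rewrite map_inj_uniq ?iota_uniq //; apply: rcons_injr.
- by rewrite size_map size_iota.
move=> _ /mapP [i _ ->]; split; first by split; [apply: prefix_rcons | rewrite size_rcons].
by apply: IH; apply: accepts_prefix acc; apply: prefix_rcons.
Qed.

Definition prefix_closure (s : seq nat) (Ls : seq (seq nat)) : {fset (seq nat)} :=
  [fset t in [seq take n l | l <- s :: Ls, n <- iota 0 (size l).+1]]%fset.

Lemma mem_prefix_closure s Ls t :
  (t \in prefix_closure s Ls) = has (prefix t) (s :: Ls).
Proof.
rewrite in_fset; apply/allpairsPdep/hasP => [[l [n [lin _ ->]]] | [l lin tl]].
  by exists l => //; apply: prefix_take.
exists l, (size t); split=> //; last by rewrite prefix_takeE.
by rewrite mem_iota add0n ltnS size_prefix.
Qed.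

Lemma is_tree_prefix_closure s Ls : is_tree (prefix_closure s Ls).
Proof.
split=> [|t n]; first by rewrite mem_prefix_closure /= prefix0s.
rewrite !mem_prefix_closure => /hasP [l lin tl]; apply/hasP; exists l => //.
exact: prefix_trans (prefix_take _ _) tl.
Qed.

Lemma prefix_closure_leaf s d Ls t :
  branching_leaves s d Ls -> t \in prefix_closure s Ls -> exists2 l, l \in Ls & prefix t l.
Proof.
move=> leaves; rewrite mem_prefix_closure /= => /orP [ts | /hasP //].
have /hasP [l lL sl] := branching_leaves_root leaves.
by exists l => //; apply: prefix_trans ts sl.
Qed.

Lemma terminal_prefix_closure s d Ls t :
  branching_leaves s d Ls -> terminal (prefix_closure s Ls) t -> t \in Ls.
Proof.
move=> leaves [tF maximal]; have [l lL tl] := prefix_closure_leaf leaves tF.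
case: (ltnP (size t) (size l)) => [lt_tl | le_lt]; last by rewrite (prefix_size_eq tl le_lt).
case: maximal; exists l; split=> //; rewrite mem_prefix_closure.
by apply/hasP; exists l; rewrite ?inE ?lL ?orbT ?prefix_refl.
Qed.

Lemma y_branching_prefix_closure s d Ls :
  branching_leaves s d Ls -> y_branching y s d (prefix_closure s Ls).
Proof.
move=> leaves; have [_ [hl branching]] := leaves.
split; [|split].
- move=> t /(prefix_closure_leaf leaves) [l /hl [sl _] tl].
  case: (leqP (size t) (size s)) => ts.
    by left; apply: prefixes_ordered tl sl ts.
  by right; apply: prefixes_ordered sl tl (ltnW ts).
- by move=> t /(terminal_prefix_closure leaves) /hl [_ []].
move=> t /(prefix_closure_leaf leaves) [l lL tl] st td.
have [|L [uL [sL hL]]] := branching t st td; first by apply/hasP; exists l.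
exists L; do 2!split=> //; move=> r /hL [tr rLs]; split=> //.
by rewrite mem_prefix_closure /= rLs orbT.
Qed.

Lemma tree_accepts_prefix_closure s d Ls :
  branching_leaves s d Ls -> tree_accepts e (prefix_closure s Ls) S.
Proof.
move=> leaves t /(terminal_prefix_closure leaves) tL.
by have [_ [hl _]] := leaves; have [_ []] := hl t tL.
Qed.

End BranchingLeaves.

Section Badness.

Variables (p : nat) (A : nat -> {fset nat}) (e y : nat).

Definition has_accepting_tree (s : seq nat) (d : nat) : Prop :=
  exists S, selection p A S /\ exists Ls, branching_leaves e y S s d Ls.

Lemma has_accepting_tree_children s d (L : seq (seq nat)) :
  uniq L -> m_of p A y <= size L ->
  (forall c, c \in L -> child s c /\ has_accepting_tree c d) ->
  has_accepting_tree s d.+1.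
Proof.
move=> uL mL hL.
have [P [PL hP]] := in_seq_choice (fun c cL => (hL c cL).2).
have [S SP yS] : exists2 S, S \in unzip2 P & y.-1 < count_mem S (unzip2 P).
  apply: (count_mem_pigeonhole (U := selection_candidates p A)).
    by move=> _ /mapP [q qP ->]; apply: selection_candidate (hP q qP).1.
  have -> : size (unzip2 P) = size L by rewrite -PL !size_map.
  by move: mL; rewrite /m_of size_map size_transversal_seqs subn1 addn1.
case/mapP: SP yS => q qP -> yS; have [selS _] := hP q qP.
exists q.2; split=> //.
apply: (@branching_leaves_children e y q.2 s d [seq q'.1 | q' <- P & q'.2 == q.2]).
- rewrite -PL in uL; exact: subseq_uniq (map_subseq _ (filter_subseq _ _)) uL.
- rewrite size_map size_filter; move: yS; rewrite count_map.
  by case: (y) => [|y'] /= yS; rewrite geq_max yS ?andbT ?(leq_ltn_trans _ yS).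
move=> c /mapP [q']; rewrite mem_filter => /andP [/eqP q'q q'P] ->.
split; first by apply: (hL _ _).1; rewrite -PL; apply: map_f.
by rewrite -q'q; have [_] := hP q' q'P.
Qed.

Lemma bad_has_accepting_tree n s d :
  bad p A (m_of p A y) e n s -> n <= d.+1 -> has_accepting_tree s d.
Proof.
elim: n s d => [//|[|n] IH] s d /=.
  by move=> [S [selS acc]] _; exists S; split=> //; apply: accepts_branching_leaves.
move=> [L [uL [sL hL]]]; case: d => [//|d] nd.
apply: (has_accepting_tree_children uL); first by rewrite sL.
by move=> c /hL [sc bc]; split=> //; apply: IH bc nd.
Qed.

End Badness.

Theorem lemma3p4 (p : nat) (A : nat -> {fset nat}) (e k y : nat) (s : seq nat) :
  (exists (S : {fset nat}) (F : {fset (seq nat)}),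
      selection p A S /\ is_tree F /\ y_branching y s k F /\
      (forall t, terminal F t -> size t = size s + k) /\
      tree_accepts e F S)
  \/
  ~ (exists L : seq (seq nat),
       uniq L /\ m_of p A y <= size L /\
       forall t, t \in L ->
         child s t /\ exists i, i <= k /\ bad p A (m_of p A y) e i t).
Proof.
apply/or_comm/imply_to_or => -[L [uL [mL hL]]].
have [S [selS [Ls leaves]]] : has_accepting_tree p A e y s k.
  case: k hL => [|d] hL.
    case: L uL mL hL => [|c L] _; first by rewrite /m_of addn1.
    by move=> _ /(_ c (mem_head _ _)) [_ [[|i] []]].
  apply: (has_accepting_tree_children uL mL) => c /hL [sc [i [id bi]]].
  by split=> //; apply: bad_has_accepting_tree bi id.
have ybr := y_branching_prefix_closure leaves.
exists S, (prefix_closure s Ls); do 2!split=> //; first exact: is_tree_prefix_closure.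
by split=> //; split; [exact: ybr.2.1 | exact: tree_accepts_prefix_closure leaves].
Qed.
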